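(* Let $D \ge 1$, $x \in [0,1]^D$, and $s_d = 2^d$ for $d = 0, \ldots, D-1$. Consider the following procedure: initialize the lists $\mathtt{indices} = [0]$ and $\mathtt{weights} = [1]$; for $d = 0$ to $D-1$, and for each $k = 0$ to $2^d - 1$ (in this order): append $s_d + \mathtt{indices}[k]$ to $\mathtt{indices}$, append $x[d]\cdot \mathtt{weights}[k]$ to $\mathtt{weights}$, and then replace $\mathtt{weights}[k]$ by $(1 - x[d])\cdot \mathtt{weights}[k]$; finally return $\mathtt{indices}$ and $\mathtt{weights}$. Then the returned lists each have length $2^D$ and, for every $k = 0, 1, \ldots, 2^D - 1$ (lists indexed from $0$), $$\mathtt{indices}[k] = \sum_{d=0}^{D-1} \mathrm{bit}_d(k)\, s_d, \qquad \mathtt{weights}[k] = \prod_{d=0}^{D-1}\Big( (1 - \mathrm{bit}_d(k))(1 - x[d]) + \mathrm{bit}_d(k)\, x[d] \Big),$$ where $\mathrm{bit}_d(k) \in \{0,1\}$ is the $d$th bit of the binary expansion of $k$. That is, the procedure returns the indices of the $2^D$ vertices of the unit cell $[0,1]^D$ (vertex $v \in \{0,1\}^D$ indexed by $\sum_d v[d] 2^d$) together with their multilinear interpolation weights at $x$.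
   Context: $x[d]$ denotes the $d$th coordinate of $x$ (coordinates indexed $0,\ldots,D-1$). The lattice parameters of a $2^D$ lattice are indexed so that the vertex $v\in\{0,1\}^D$ has index $\sum_d v[d]2^d$; thus $s_d = 2^d$ is the difference of indices of two vertices adjacent in the $d$th dimension. The multilinear interpolation weight of vertex $v$ at $x$ is $\prod_d x[d]^{v[d]}(1-x[d])^{1-v[d]}$. Lists are appended to at the end, and the index $k$ in the inner loop refers to positions $0,\ldots,2^d-1$ of the lists as they stand. *)

From mathcomp Require Import all_boot all_order all_algebra.
Set Implicit Arguments. Unset Strict Implicit. Unset Printing Implicit Defensive.
Import Order.TTheory GRing.Theory Num.Theory.
Local Open Scope ring_scope.

Section Procedure.
Variable R : nzRingType.

Definition interp_step (d : nat) (xd : R) (st : seq nat * seq R) (k : nat)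
  : seq nat * seq R :=
  let: (ind, w) := st in
  let ind' := rcons ind (2 ^ d + nth 0%N ind k)%N in
  let w' := rcons w (xd * nth 0 w k) in
  (ind', set_nth 0 w' k ((1 - xd) * nth 0 w k)).

Definition interp_dim (d : nat) (xd : R) (st : seq nat * seq R) :=
  foldl (interp_step d xd) st (iota 0 (2 ^ d)).

Definition interp_proc (D : nat) (x : 'I_D -> R) : seq nat * seq R :=
  foldl (fun st (d : 'I_D) => interp_dim d (x d) st) ([:: 0%N], [:: 1])
        (enum 'I_D).
End Procedure.

Definition bit (d k : nat) : nat := odd (k %/ 2 ^ d).

From mathcomp Require Import all_boot all_order all_algebra.
Import Order.TTheory GRing.Theory Num.Theory.

(* The pass of the inner loop for dimension [d] turns lists [ind], [w] of
   length [2^d] into [ind ++ map (addn 2^d) ind] and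
   [map ( *%R (1 - x d)) w ++ map ( *%R (x d)) w].  The table of vertex indices
   and weights of dimension [d+1] splits in the same way according to the top
   bit [d] of the position, so the procedure computes the table by induction
   on the dimension.  No assumption on [D] or [x] is needed, and the weights
   are correct over any commutative ring. *)

Lemma set_nth_cat_cons (T : Type) (x0 : T) (s1 s2 : seq T) (a b : T) n :
  size s1 = n -> set_nth x0 (s1 ++ a :: s2) n b = s1 ++ b :: s2.
Proof. by move<-; elim: s1 => //= c s1 ->. Qed.

Lemma iota0S n : iota 0 n.+1 = rcons (iota 0 n) n.
Proof. by rewrite -addn1 iotaD cats1. Qed.

Lemma mkseq_double (T : Type) (f : nat -> T) n :
  mkseq f (n + n) = mkseq f n ++ mkseq (fun k => f (n + k)) n.
Proof.
have shift : iota n n = map (addn n) (iota 0 n) by rewrite -iotaDl addn0.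
by rewrite /mkseq iotaD map_cat add0n shift -map_comp.
Qed.

Lemma foldl_map_eq (T1 T2 S : Type) (f : S -> T2 -> S) (g : S -> T1 -> S)
    (h : T1 -> T2) z s :
  (forall a c, f a (h c) = g a c) -> foldl f z (map h s) = foldl g z s.
Proof. by move=> fhg; elim: s z => //= c s IH z; rewrite fhg IH. Qed.

Lemma bit_small d k : k < 2 ^ d -> bit d k = 0.
Proof. by move=> lt_k; rewrite /bit divn_small. Qed.

Lemma bit_expnD_self d k : k < 2 ^ d -> bit d (2 ^ d + k) = 1.
Proof.
by move=> lt_k; rewrite /bit divnDl // divnn expn_gt0 (divn_small lt_k).
Qed.

Lemma bit_expnD e d k : e < d -> bit e (2 ^ d + k) = bit e k.
Proof.
move=> lt_ed; rewrite /bit divnDl ?dvdn_exp2l 1?ltnW //.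
rewrite -(subnK (ltnW lt_ed)) expnD mulnK ?expn_gt0 // oddD oddX.
by rewrite subn_eq0 leqNgt lt_ed.
Qed.

Definition vertex_index m k := \sum_(d < m) bit d k * 2 ^ d.

Lemma mkseq_vertex_indexS m :
  mkseq (vertex_index m.+1) (2 ^ m.+1) =
  mkseq (vertex_index m) (2 ^ m) ++
  map (addn (2 ^ m)) (mkseq (vertex_index m) (2 ^ m)).
Proof.
rewrite expnS mul2n -addnn mkseq_double /mkseq -map_comp.
congr (_ ++ _); apply/eq_in_map => k; rewrite mem_iota => /andP[_ lt_k].
  by rewrite /vertex_index big_ord_recr /= bit_small // addn0.
rewrite /vertex_index big_ord_recr /= bit_expnD_self // mul1n addnC.
by congr (_ + _); apply: eq_bigr => d _; rewrite bit_expnD.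
Qed.

Local Open Scope ring_scope.

Section InnerLoop.
Variables (R : nzRingType) (d : nat) (xd : R).

Lemma foldl_interp_step (ind : seq nat) (w : seq R) j :
  (j <= size ind)%N -> (j <= size w)%N ->
  foldl (interp_step d xd) (ind, w) (iota 0%N j) =
  (ind ++ map (addn (2 ^ d)) (take j ind),
   map ( *%R (1 - xd)) (take j w) ++ drop j w ++ map ( *%R xd) (take j w)).
Proof.
elim: j => [|j IH] ltj_ind ltj_w; first by rewrite !take0 drop0 /= !cats0.
rewrite iota0S foldl_rcons (IH (ltnW ltj_ind) (ltnW ltj_w)) /= nth_cat ltj_ind.
have size_pre : size (map ( *%R (1 - xd)) (take j w)) = j.
  by rewrite size_map size_take ltj_w.
rewrite nth_cat size_pre ltnn subnn (drop_nth 0 ltj_w) /=.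
rewrite !rcons_cat /= set_nth_cat_cons //.
rewrite (take_nth 0%N ltj_ind) (take_nth 0 ltj_w) !map_rcons.
by rewrite cat_rcons rcons_cat.
Qed.

Lemma interp_dim_cat (ind : seq nat) (w : seq R) :
  size ind = (2 ^ d)%N -> size w = (2 ^ d)%N ->
  interp_dim d xd (ind, w) =
  (ind ++ map (addn (2 ^ d)) ind, map ( *%R (1 - xd)) w ++ map ( *%R xd) w).
Proof.
move=> size_ind size_w.
rewrite /interp_dim foldl_interp_step ?size_ind ?size_w //.
by rewrite -size_ind take_size size_ind -size_w take_size drop_size.
Qed.
End InnerLoop.

Section Weights.
Variables (R : comNzRingType) (X : nat -> R).

Definition vertex_weight m k :=
  \prod_(d < m) ((1 - (bit d k)%:R) * (1 - X d) + (bit d k)%:R * X d).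

Lemma mkseq_vertex_weightS m :
  mkseq (vertex_weight m.+1) (2 ^ m.+1) =
  map ( *%R (1 - X m)) (mkseq (vertex_weight m) (2 ^ m)) ++
  map ( *%R (X m)) (mkseq (vertex_weight m) (2 ^ m)).
Proof.
rewrite expnS mul2n -addnn mkseq_double /mkseq -!map_comp.
congr (_ ++ _); apply/eq_in_map => k; rewrite mem_iota => /andP[_ lt_k] /=.
  rewrite /vertex_weight big_ord_recr /= bit_small //.
  by rewrite subr0 mul1r mul0r addr0 mulrC.
rewrite /vertex_weight big_ord_recr /= bit_expnD_self //.
rewrite subrr mul0r add0r mul1r mulrC.
by congr (_ * _); apply: eq_bigr => d _; rewrite bit_expnD.
Qed.

Lemma foldl_interp_dim m :
  foldl (fun st d => interp_dim d (X d) st) ([:: 0%N], [:: 1]) (iota 0%N m) =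
  (mkseq (vertex_index m) (2 ^ m), mkseq (vertex_weight m) (2 ^ m)).
Proof.
elim: m => [|m IH].
  by rewrite /mkseq /= /vertex_index /vertex_weight !big_ord0.
rewrite iota0S foldl_rcons IH interp_dim_cat ?size_mkseq //.
by rewrite mkseq_vertex_indexS mkseq_vertex_weightS.
Qed.
End Weights.

Lemma interp_proc_iota (R : nzRingType) D (x : 'I_D -> R) :
  interp_proc x =
  foldl (fun st d => interp_dim d (oapp x 0 (insub d)) st) ([:: 0%N], [:: 1])
        (iota 0%N D).
Proof.
rewrite /interp_proc -val_enum_ord; symmetry.
by apply: foldl_map_eq => st d; rewrite /= valK.
Qed.

Theorem lemma2 (R : realFieldType) (D : nat) (x : 'I_D -> R) :
  (1 <= D)%N ->
  (forall d, 0 <= x d <= 1) ->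
  let ind := (interp_proc x).1 in
  let w := (interp_proc x).2 in
  [/\ size ind = (2 ^ D)%N, size w = (2 ^ D)%N &
      forall k : nat, (k < 2 ^ D)%N ->
        nth 0%N ind k = (\sum_(d < D) bit d k * 2 ^ d)%N /\
        nth 0 w k = \prod_(d < D)
          ((1 - (bit d k)%:R) * (1 - x d) + (bit d k)%:R * x d)].
Proof.
move=> _ _ /=; rewrite interp_proc_iota foldl_interp_dim /= !size_mkseq.
split=> // k lt_k; rewrite !nth_mkseq //; split=> //.
by apply: eq_bigr => d _; rewrite /= valK.
Qed.
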